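(* Let $k\le l$ be positive integers with $\gcd(k,l)=1$, let $n\ge1$ and $m\ge0$ be integers, and write $m=qn+r$ with integers $q\ge 0$, $0\le r<n$. Then $$U^{k,l}(m,n)= \max\bigl(nkq,\ nkq+r(k+l)-nl\bigr).$$
   Context: $\mathcal D^{k,l}(m,n)$ denotes the set of all $nk\times nl$ matrices with nonnegative integer entries all of whose row sums equal $ml$ and all of whose column sums equal $mk$. For an $s\times t$ matrix $A=(a_{ij})$ with $s\le t$, a transversal of $A$ is a set of entries $T=\{a_{1i_1},\dots,a_{si_s}\}$ with $i_1,\dots,i_s\in\{1,\dots,t\}$ pairwise distinct, and $|T|=a_{1i_1}+\cdots+a_{si_s}$. Define ${\rm tropdet}(A)=\min_T|T|$ over all transversals $T$ of $A$, and $U^{k,l}(m,n)=\max_{A\in\mathcal D^{k,l}(m,n)}{\rm tropdet}(A)$. *)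

From mathcomp Require Import all_boot all_order all_algebra.
Set Implicit Arguments. Unset Strict Implicit. Unset Printing Implicit Defensive.

Definition inD (k l m n : nat) (A : 'M[nat]_(n * k, n * l)) : Prop :=
  (forall i, \sum_(j < n * l) A i j = m * l) /\
  (forall j, \sum_(i < n * k) A i j = m * k).
Arguments inD : clear implicits.

(* Transversals of an s x t matrix correspond to injective maps f : 'I_s -> 'I_t;
   |T| = \sum_i A i (f i).  tropdet A is the minimum over all transversals.
   The neutral element of the iterated min is the total sum of entries, which
   bounds every |T| (entries are nonnegative), so it does not affect the
   minimum when at least one transversal exists (i.e. s <= t). *)
Definition tropdet (s t : nat) (A : 'M[nat]_(s, t)) : nat :=
  \big[minn/ \sum_(i < s) \sum_(j < t) A i j]_(f : {ffun 'I_s -> 'I_t} | injectiveb f)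
     \sum_(i < s) A i (f i).

Definition is_U (k l m n u : nat) : Prop :=
  (exists A : 'M[nat]_(n * k, n * l), inD k l m n A /\ tropdet A = u) /\
  (forall A : 'M[nat]_(n * k, n * l), inD k l m n A -> tropdet A <= u).

(* Upper bound: pad A with zero rows to a square matrix and take a dual
   optimum of the assignment problem (Egervary's theorem, obtained from Hall's
   marriage theorem by the Hungarian reduction): potentials x, y with
   x i <= y j + A i j and a permutation of weight at most sum x - sum y.  With
   c the least column potential and T the largest potential of a genuine row,
   summing the constraints along one column, along one row and over the padding
   rows gives tropdet A + nk c <= nk T and tropdet A + nl T <= nl c + m (k + l);
   comparing T with c + q yields the bound.
   Lower bound: the matrix made of k x l blocks, block (a, b) being constant
   q + [a < r and b < r] + r [r <= a = b], lies in D^{k,l}(m,n), and a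
   transversal gains 1 on each of the rk rows of the first r row blocks except
   for those entering the (n - r) l columns outside the first r column blocks. *)

From mathcomp Require Import all_boot all_order all_algebra.
From mathcomp Require Import zify ring.
Set Implicit Arguments. Unset Strict Implicit. Unset Printing Implicit Defensive.
Import Order.TTheory.

Section Hall.
Variables (I J : finType) (E : I -> J -> bool).
Implicit Types (A S : {set I}) (B C : {set J}).

Definition nbhd (B : {set J}) (S : {set I}) : {set J} :=
  [set j in B | [exists i in S, E i j]].

Lemma nbhdDl B C S : nbhd (B :\: C) S = nbhd B S :\: C.
Proof. by apply/setP => j; rewrite !inE; case: (j \in C); case: (j \in B). Qed.

Lemma nbhdUr B S S' : nbhd B (S :|: S') = nbhd B S :|: nbhd B S'.
Proof.
apply/setP => j; rewrite !inE -andb_orr; congr (_ && _).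
apply/existsP/orP => [[i /andP [] ]|[|]] /=.
- by rewrite inE => /orP [] iS Eij; [left | right]; apply/existsP; exists i; rewrite iS.
- by case/existsP=> i /andP [iS Eij]; exists i; rewrite inE iS.
- by case/existsP=> i /andP [iS Eij]; exists i; rewrite inE iS orbT.
Qed.

Definition hall_condition (A : {set I}) (B : {set J}) : Prop :=
  forall S : {set I}, S \subset A -> #|S| <= #|nbhd B S|.

Definition matching (A : {set I}) (B : {set J}) (f : I -> J) : Prop :=
  {in A &, injective f} /\ {in A, forall i, (f i \in B) && E i (f i)}.

Lemma hall_conditionS A A' B : A' \subset A -> hall_condition A B -> hall_condition A' B.
Proof. by move=> sA'A hA S sSA'; apply/hA/(subset_trans sSA'). Qed.

Lemma matching_set0 B f : matching set0 B f.
Proof. by split=> [x|x]; rewrite inE. Qed.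

Lemma matching_glue A S B C f g :
  matching S B f -> {in S, forall i, f i \in C} -> matching (A :\: S) (B :\: C) g ->
  matching A B (fun i => if i \in S then f i else g i).
Proof.
move=> [fI fB] fC [gI gB].
have gD i : i \in A -> i \notin S -> (g i \in B) && (g i \notin C) && E i (g i).
  move=> iA iS; have /andP [] : (g i \in B :\: C) && E i (g i).
    by apply: gB; rewrite inE iS iA.
  by rewrite inE => /andP [-> ->] ->.
split=> [x y xA yA /=|i iA /=].
- case xS: (x \in S); case yS: (y \in S); first exact: fI.
  + move=> fxgy; have /andP [/andP [_]] := gD y yA (negbT yS).
    by rewrite -fxgy fC.
  + move=> gxfy; have /andP [/andP [_]] := gD x xA (negbT xS).
    by rewrite gxfy fC.
  + by apply: gI; rewrite inE ?xS ?yS.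
- case iS: (i \in S); first exact: fB.
  by case/andP: (gD i iA (negbT iS)) => /andP [-> _] ->.
Qed.

Section HallStep.
Variables (A : {set I}) (B : {set J}).
Hypothesis hall_smaller : forall A' B', #|A'| < #|A| -> hall_condition A' B' ->
  exists f, matching A' B' f.
Hypothesis hallAB : hall_condition A B.

Lemma hall_tight_step S0 : S0 \proper A -> S0 != set0 -> #|nbhd B S0| <= #|S0| ->
  exists f, matching A B f.
Proof.
move=> ltS0A nzS0 tight; have sS0A := proper_sub ltS0A.
have [f fM] := hall_smaller (proper_card ltS0A) (hall_conditionS sS0A hallAB).
have fN : {in S0, forall i, f i \in nbhd B S0}.
  move=> i iS; case/andP: (fM.2 i iS) => fiB Eifi.
  by rewrite inE fiB; apply/existsP; exists i; rewrite iS.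
have [g gM] : exists g, matching (A :\: S0) (B :\: nbhd B S0) g.
  apply: hall_smaller => [|S sS].
    by rewrite cardsDS //; move: nzS0; rewrite -card_gt0; have := proper_card ltS0A; lia.
  have [sSA disS] : S \subset A /\ S :&: S0 = set0.
    split; first exact: subset_trans sS (subsetDl _ _).
    apply/setP => i; rewrite !inE; apply/andP => -[iS iS0].
    by have := subsetP sS i iS; rewrite inE iS0.
  have := @hallAB (S :|: S0); rewrite subUset sSA sS0A nbhdUr cardsU disS cards0 subn0.
  rewrite nbhdDl cardsU => /(_ isT); have := cardsID (nbhd B S0) (nbhd B S); lia.
by exists (fun i => if i \in S0 then f i else g i); exact: matching_glue fM fN gM.
Qed.

Lemma hall_surplus_step i0 : i0 \in A ->
  (forall S, S \proper A -> S != set0 -> #|S| < #|nbhd B S|) -> exists f, matching A B f.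
Proof.
move=> i0A surplus.
have /set0Pn [j1] : nbhd B [set i0] != set0.
  by rewrite -card_gt0 (leq_trans _ (hallAB _)) ?cards1 ?sub1set.
rewrite inE => /andP [j1B /existsP [_ /andP [/set1P -> Ei0j1]]].
have [g gM] : exists g, matching (A :\ i0) (B :\ j1) g.
  apply: hall_smaller => [|S sS]; first by rewrite (cardsD1 i0 A) i0A.
  have [->|nzS] := eqVneq S set0; first by rewrite cards0.
  have := @surplus S (sub_proper_trans sS (properD1 i0A)) nzS.
  by rewrite nbhdDl (cardsD1 j1 (nbhd B S)); case: (j1 \in _) => /=; lia.
exists (fun i => if i \in [set i0] then j1 else g i).
apply: (matching_glue (C := [set j1])) gM => [|i _]; last exact: set11.
by split=> [x y /set1P -> /set1P -> | x /set1P ->] //; rewrite j1B.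
Qed.
End HallStep.

Theorem hall_marriage (j0 : J) A B : hall_condition A B -> exists f, matching A B f.
Proof.
elim: {A}_.+1 {-2}A (ltnSn #|A|) B => // N IH A leAN B hallAB.
have {}IH A' B' : #|A'| < #|A| -> hall_condition A' B' -> exists f, matching A' B' f.
  by move=> ltA'A; apply: IH; apply: leq_trans ltA'A _.
have [->|[i0 i0A]] := set_0Vmem A; first by exists (fun=> j0); apply: matching_set0.
have [/existsP [S0 /and3P [ltS0A nzS0 tight]]|no_tight] :=
  boolP [exists S0 : {set I}, [&& S0 \proper A, S0 != set0 & #|nbhd B S0| <= #|S0|]].
  exact: (hall_tight_step IH hallAB ltS0A nzS0 tight).
apply: (hall_surplus_step IH hallAB i0A) => S ltSA nzS; rewrite ltnNge; apply/negP => tight.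
by move/existsP: no_tight; apply; exists S; rewrite ltSA nzS tight.
Qed.
End Hall.

Lemma sum_mem_card (T : finType) (S : {set T}) : \sum_i (i \in S : nat) = #|S|.
Proof. by rewrite -sum1_card [RHS]big_mkcond; apply: eq_bigr => i _; case: (i \in S). Qed.

Lemma sum_mem_perm (T : finType) (h : T -> T) (S : {set T}) : injective h ->
  \sum_i (h i \in S : nat) = #|S|.
Proof.
move=> hI; rewrite -(card_preimset S hI) -sum_mem_card.
by apply: eq_bigr => i _; rewrite inE.
Qed.

Section Egervary.
Variable T : finType.
Implicit Types (A : T -> T -> nat) (S : {set T}).

Definition dual_certificate A : Prop :=
  exists x y : T -> nat, (forall i j, x i <= y j + A i j) /\
    exists2 f : T -> T, injective f & \sum_i A i (f i) + \sum_j y j <= \sum_i x i.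

Definition zero_nbhd A S : {set T} := nbhd (fun i j => A i j == 0) setT S.

(* Lowering the rows of S and raising the columns of its zero-neighbourhood
   keeps the costs nonnegative and changes the weight of every permutation by
   #|zero_nbhd A S| - #|S|, which is negative when S violates Hall's condition. *)
Definition reduce_cost A S i j : nat := A i j + (j \in zero_nbhd A S) - (i \in S).

Lemma reduce_costK A S i j :
  reduce_cost A S i j + (i \in S) = A i j + (j \in zero_nbhd A S).
Proof.
rewrite /reduce_cost; case iS: (i \in S); case jN: (j \in zero_nbhd A S) => /=; try lia.
have : A i j != 0.
  apply: contraFN jN => /eqP Aij0.
  by rewrite inE in_setT; apply/existsP; exists i; rewrite iS Aij0.
lia.
Qed.

Lemma sum_reduce_cost A S (h : T -> T) : injective h ->
  \sum_i reduce_cost A S i (h i) + #|S| = \sum_i A i (h i) + #|zero_nbhd A S|.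
Proof.
move=> hI; rewrite -sum_mem_card -(sum_mem_perm _ hI) -!big_split /=.
by apply: eq_bigr => i _; rewrite reduce_costK.
Qed.

Lemma dual_certificate_reduce A S :
  dual_certificate (reduce_cost A S) -> dual_certificate A.
Proof.
move=> [x [y [xy [f fI fW]]]].
exists (fun i => x i + (i \in S)), (fun j => y j + (j \in zero_nbhd A S)); split.
  by move=> i j /=; have := xy i j; have := reduce_costK A S i j; lia.
exists f => //; rewrite !big_split /= !sum_mem_card.
by have := sum_reduce_cost A S fI; lia.
Qed.

Lemma dual_certificate_zero_perfect (j0 : T) A :
  hall_condition (fun i j => A i j == 0) setT setT -> dual_certificate A.
Proof.
move=> /(hall_marriage j0) [f [fI fA0]].
exists (fun=> 0), (fun=> 0); split=> //; exists f.
  by move=> i i'; apply: fI; rewrite in_setT.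
by rewrite !big1 // => i _; case/andP: (fA0 i (in_setT i)) => _ /eqP.
Qed.

Theorem egervary (j0 : T) A : dual_certificate A.
Proof.
elim: {A}_.+1 {-2}A (ltnSn (\sum_i A i i)) => // N IH A leAN.
have [hallA|] := boolP [forall S : {set T}, #|S| <= #|zero_nbhd A S|].
  by apply: (dual_certificate_zero_perfect j0) => S _; apply: (forallP hallA).
case/forallPn => S; rewrite -ltnNge => deficient.
apply: (dual_certificate_reduce (S := S)); apply: IH.
by have := sum_reduce_cost A S (@inj_id T); lia.
Qed.
End Egervary.

Lemma tropdet_le_transversal s t (A : 'M[nat]_(s, t)) (f : {ffun 'I_s -> 'I_t}) :
  injective f -> tropdet A <= \sum_i A i (f i).
Proof.
move=> /injectiveP fI; rewrite /tropdet.
exact: (@bigmin_le_cond _ _ _ _ f _ (fun g : {ffun 'I_s -> 'I_t} => \sum_i A i (g i)) fI).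
Qed.

Lemma leq_tropdet s t (A : 'M[nat]_(s, t)) b :
  b <= \sum_i \sum_j A i j ->
  (forall f : {ffun 'I_s -> 'I_t}, injective f -> b <= \sum_i A i (f i)) ->
  b <= tropdet A.
Proof.
move=> b_le_total b_le_trans; apply: (big_ind (fun v => b <= v)) => //.
  by move=> u v b_u b_v; rewrite leq_min b_u b_v.
by move=> f /injectiveP; apply: b_le_trans.
Qed.

Lemma sum_ord_lt N M : M <= N -> \sum_(i < N) (i < M : nat) = M.
Proof.
move=> leMN; rewrite -[RHS](card_ord M) -sum1_card (big_ord_widen N (fun=> 1) leMN).
by rewrite [RHS]big_mkcond; apply: eq_bigr => i _; case: (i < M).
Qed.

Lemma sum_ord_geq N M : M <= N -> \sum_(i < N) (M <= i : nat) = N - M.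
Proof.
move=> le_MN; have : \sum_(i < N) ((M <= i : nat) + (i < M : nat)) = N.
  by rewrite -[RHS]card_ord -sum1_card; apply: eq_bigr => i _; case: ltnP.
rewrite big_split /= sum_ord_lt //; lia.
Qed.

Lemma sum_ord_divn N d (F : nat -> nat) : 0 < d ->
  \sum_(j < N * d) F (j %/ d) = d * \sum_(b < N) F b.
Proof.
move=> d_gt0; rewrite -(big_mkord xpredT F) -(big_mkord xpredT (fun j => F (j %/ d))).
rewrite big_nat_mul big_distrr /=.
apply: eq_big_nat => b _; rewrite (eq_big_nat _ _ (F2 := fun=> F b)).
  by rewrite sum_nat_const_nat mulSn addnK.
move=> j /andP [lo hi]; congr F; apply/eqP.
by rewrite eqn_leq -ltnS ltn_divLR // leq_divRL // hi lo.
Qed.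

Lemma leq_sum_inj s t (f : 'I_s -> 'I_t) (y : 'I_t -> nat) : injective f ->
  \sum_i y (f i) <= \sum_j y j.
Proof.
move=> fI; rewrite -(big_imset _ (in2W fI)) /=.
by rewrite [X in _ <= X](bigID (mem (f @: 'I_s))) /= leq_addr.
Qed.

Section PaddedRows.
Variables (s t : nat) (A : 'M[nat]_(s, t)).
Hypothesis le_st : s <= t.

Definition pad_rows (i j : 'I_t) : nat :=
  if insub (val i) : option 'I_s is Some i' then A i' j else 0.

Lemma pad_rows_widen (i : 'I_s) j : pad_rows (widen_ord le_st i) j = A i j.
Proof. by rewrite /pad_rows /= valK. Qed.

Lemma sum_pad_rows (g : 'I_t -> 'I_t) :
  \sum_i pad_rows i (g i) = \sum_(i < s) A i (g (widen_ord le_st i)).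
Proof.
rewrite (bigID (fun i : 'I_t => i < s)) /= [X in _ + X]big1 => [|i]; last first.
  by rewrite -leqNgt /pad_rows => ge_is; rewrite insubF // ltnNge ge_is.
by rewrite addn0 (big_ord_narrow le_st); apply: eq_bigr => i _; rewrite pad_rows_widen.
Qed.

Lemma tropdet_le_pad_rows (f : 'I_t -> 'I_t) : injective f ->
  tropdet A <= \sum_i pad_rows i (f i).
Proof.
move=> fI; rewrite sum_pad_rows.
pose g : {ffun 'I_s -> 'I_t} := [ffun i => f (widen_ord le_st i)].
have /tropdet_le_transversal : injective g.
  by move=> i i'; rewrite !ffunE => /fI /(congr1 val) /= /val_inj.
by move/(_ A); under eq_bigr do rewrite ffunE.
Qed.
End PaddedRows.

Section PotentialBounds.
Variables (s t R C : nat) (A : 'M[nat]_(s, t)).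
Hypotheses (le_st : s <= t) (s_gt0 : 0 < s).
Hypotheses (row_sum : forall i, \sum_j A i j = R) (col_sum : forall j, \sum_i A i j = C).

Lemma tropdet_potential_bounds : exists c T,
  tropdet A + s * c <= s * T /\ tropdet A + t * T <= t * c + C + R.
Proof.
pose i0 := widen_ord le_st (Ordinal s_gt0).
have [x [y [xy [f fI fW]]]] := egervary i0 (pad_rows A).
have le_tropdet := tropdet_le_pad_rows A le_st fI.
have [jc _ c_min] := @arg_minnP _ i0 xpredT y isT.
have [iT iT_s T_max] := @arg_maxnP _ i0 (fun i : 'I_t => i < s) x s_gt0.
exists (y jc), (x iT).
have sum_x_col : \sum_i x i <= t * y jc + C.
  have := leq_sum (index_enum _) (fun i (_ : true) => xy i jc).
  by rewrite big_split /= -(col_sum jc) -(sum_pad_rows _ le_st) sum_nat_const card_ord.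
have sum_x_rows : \sum_i x i + s * y jc <= t * y jc + s * x iT.
  (* A padding row only has zero costs, so its potential is at most c. *)
  have x_le i : x i + (i < s) * y jc <= y jc + (i < s) * x iT.
    case: ltnP => lt_is /=; first by rewrite !mul1n addnC leq_add2l; apply: T_max.
    by rewrite !mul0n !addn0 (leq_trans (xy i jc)) // /pad_rows insubF ?addn0 // ltnNge lt_is.
  have := leq_sum (index_enum _) (fun i (_ : true) => x_le i).
  by rewrite !big_split /= -!big_distrl /= sum_ord_lt // sum_nat_const card_ord mulnC.
have sum_y_row : t * x iT <= \sum_j y j + R.
  have := leq_sum (index_enum _) (fun j (_ : true) => xy iT j).
  rewrite big_split /= sum_nat_const card_ord -(row_sum (Ordinal iT_s)).
  have P_iT j : pad_rows A iT j = A (Ordinal iT_s) j.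
    by rewrite -(pad_rows_widen _ le_st); congr pad_rows; apply: val_inj.
  by under [X in _ <= _ + X]eq_bigr do rewrite P_iT.
have sum_y_min : t * y jc <= \sum_j y j.
  have := leq_sum (index_enum _) (fun j (_ : true) => c_min j isT).
  by rewrite sum_nat_const card_ord.
split; lia.
Qed.
End PotentialBounds.

Lemma potential_bounds_le_max W c T n k l q r :
  W + n * k * c <= n * k * T ->
  W + n * l * T <= n * l * c + (q * n + r) * k + (q * n + r) * l ->
  W <= maxn (n * k * q) (n * k * q + r * (k + l) - n * l).
Proof.
move=> le_W_k le_W_l; rewrite leq_max; case: (leqP T (c + q)) => le_Tcq.
  have : n * k * T <= n * k * (c + q) by rewrite leq_mul2l le_Tcq orbT.
  lia.
have : n * l * (c + q).+1 <= n * l * T by rewrite leq_mul2l le_Tcq orbT.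
lia.
Qed.

Lemma tropdet_le_U k l n q r (A : 'M[nat]_(n * k, n * l)) :
  0 < k -> k <= l -> 0 < n -> inD k l (q * n + r) n A ->
  tropdet A <= maxn (n * k * q) (n * k * q + r * (k + l) - n * l).
Proof.
move=> k_gt0 le_kl n_gt0 [row_sum col_sum].
have le_st : n * k <= n * l by rewrite leq_mul2l le_kl orbT.
have s_gt0 : 0 < n * k by rewrite muln_gt0 n_gt0.
have [c [T [le_k le_l]]] := tropdet_potential_bounds le_st s_gt0 row_sum col_sum.
exact: potential_bounds_le_max le_k le_l.
Qed.

Section ExtremalMatrix.
Variables (k l n q r : nat).
Hypotheses (k_gt0 : 0 < k) (l_gt0 : 0 < l) (n_gt0 : 0 < n) (le_rn : r <= n).

Definition extremal_block (a b : nat) : nat :=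
  q + ((a < r) && (b < r)) + r * ((r <= a) && (a == b)).

Definition extremal_matrix : 'M[nat]_(n * k, n * l) :=
  \matrix_(i, j) extremal_block (i %/ k) (j %/ l).

Lemma extremal_blockC a b : extremal_block a b = extremal_block b a.
Proof. by rewrite /extremal_block andbC eq_sym; case: eqP => [->|]; rewrite ?andbF. Qed.

Lemma sum_extremal_block a : a < n -> \sum_(b < n) extremal_block a b = q * n + r.
Proof.
move=> lt_an; rewrite !big_split /= sum_nat_const card_ord -big_distrr /= mulnC.
case: (ltnP a r) => [lt_ar|le_ra].
  by rewrite sum_ord_lt // big1 ?muln0 ?addn0.
rewrite big1 // (bigD1 (Ordinal lt_an)) //= eqxx big1 ?addn0 ?muln1 // => b.
by rewrite -val_eqE /= eq_sym => /negbTE ->.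
Qed.

Lemma extremal_matrix_inD : inD k l (q * n + r) n extremal_matrix.
Proof.
split=> [i|j].
  under eq_bigr do rewrite mxE.
  rewrite (sum_ord_divn _ (extremal_block (i %/ k))) // sum_extremal_block 1?mulnC //.
  by rewrite ltn_divLR // mulnC.
under eq_bigr do rewrite mxE extremal_blockC.
rewrite (sum_ord_divn _ (extremal_block (j %/ l))) // sum_extremal_block 1?mulnC //.
by rewrite ltn_divLR // mulnC.
Qed.

Lemma extremal_block_lower a b : q + (a < r) <= extremal_block a b + (r <= b).
Proof. by rewrite /extremal_block; case: (ltnP a r); case: (ltnP b r) => /=; lia. Qed.

Lemma extremal_max_le :
  maxn (n * k * q) (n * k * q + r * (k + l) - n * l) <= (q * n + r) * k.
Proof.
have : r * l <= n * l by rewrite leq_mul2r le_rn orbT.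
rewrite geq_max; nia.
Qed.

Lemma extremal_transversal_ge_q (f : 'I_(n * k) -> 'I_(n * l)) :
  n * k * q <= \sum_i extremal_matrix i (f i).
Proof.
have q_le i : q <= extremal_matrix i (f i) by rewrite mxE /extremal_block -addnA leq_addr.
by have := leq_sum (index_enum _) (fun i (_ : true) => q_le i); rewrite sum_nat_const card_ord.
Qed.

Lemma extremal_transversal_lower (f : 'I_(n * k) -> 'I_(n * l)) : injective f ->
  (q * n + r) * k <= \sum_i extremal_matrix i (f i) + (n - r) * l.
Proof.
move=> fI; have outside : \sum_i (r <= f i %/ l : nat) <= (n - r) * l.
  rewrite [(n - r) * l]mulnC -sum_ord_geq // -(sum_ord_divn _ (fun b => (r <= b : nat))) //.
  exact: (leq_sum_inj (fun j : 'I_(n * l) => (r <= j %/ l : nat)) fI).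
have entry (i : 'I_(n * k)) : q + (i %/ k < r) <= extremal_matrix i (f i) + (r <= f i %/ l).
  by rewrite mxE; exact: extremal_block_lower.
have := leq_sum (index_enum _) (fun i (_ : true) => entry i).
rewrite (sum_ord_divn _ (fun a => q + (a < r))) // !big_split /= sum_nat_const card_ord.
rewrite sum_ord_lt // [k * _]mulnC [n * q]mulnC => /leq_trans; apply.
by rewrite leq_add2l.
Qed.

Lemma extremal_matrix_tropdet :
  maxn (n * k * q) (n * k * q + r * (k + l) - n * l) <= tropdet extremal_matrix.
Proof.
have [row_sum _] := extremal_matrix_inD.
apply: leq_tropdet => [|f fI].
  under eq_bigr do rewrite row_sum.
  rewrite sum_nat_const card_ord (leq_trans extremal_max_le) //.
  have -> : n * k * ((q * n + r) * l) = (q * n + r) * k * (n * l) by ring.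
  by rewrite leq_pmulr // muln_gt0 n_gt0.
have := extremal_transversal_lower fI; have := extremal_transversal_ge_q f.
have : r * l <= n * l by rewrite leq_mul2r le_rn orbT.
rewrite geq_max; nia.
Qed.
End ExtremalMatrix.

Theorem theorem5p3 (k l n m q r : nat) :
  0 < k -> k <= l -> coprime k l -> 0 < n ->
  m = q * n + r -> r < n ->
  is_U k l m n (maxn (n * k * q) (n * k * q + r * (k + l) - n * l)).
Proof.
(* The formula holds without the coprimality of k and l. *)
move=> k_gt0 le_kl _ n_gt0 -> /ltnW le_rn.
have l_gt0 := leq_trans k_gt0 le_kl.
split=> [|A]; last exact: tropdet_le_U.
exists (extremal_matrix k l n q r); split; first exact: extremal_matrix_inD.
apply/eqP; rewrite eqn_leq extremal_matrix_tropdet // andbT.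
exact/tropdet_le_U/extremal_matrix_inD.
Qed.
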